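(* Let $\gamma\in\mathbb{R}$ and $\epsilon_{\text{abs}}>0$, and let $\hat g_{-,\gamma}\in\arg\min_{f\in\mathcal{F}}\hat h_{-,\gamma}(f)$. If $\hat h_{-,\gamma}(\hat g_{-,\gamma})\ge0$, then $$\frac{\hat h_{-,\gamma}(\hat g_{-,\gamma})}{\epsilon_{\text{abs}}}-\gamma\le\widehat{MR}(f)$$ for all $f\in\mathcal{F}$ with $\hat e_{\text{orig}}(f)\le\epsilon_{\text{abs}}$; moreover $-\gamma\le\widehat{MR}(f)$ for all $f\in\mathcal{F}$. Additionally, if $\hat h_{-,\gamma}(\hat g_{-,\gamma})\ge0$ and $\hat e_{\text{orig}}(\hat g_{-,\gamma})\le\epsilon_{\text{abs}}$ with at least one of these two inequalities holding with equality, then the displayed inequality holds with equality for $f=\hat g_{-,\gamma}$.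
   Context: Setting: $\mathcal{F}$ a set of prediction models, $L\ge0$ a loss, and a fixed observed sample $(\mathbf{y}_{[i]},\mathbf{X}_{1[i]},\mathbf{X}_{2[i]})$, $i=1,\dots,n$, $n\ge2$. $\hat e_{\text{orig}}(f)=\frac1n\sum_iL\{f,(\mathbf{y}_{[i]},\mathbf{X}_{1[i]},\mathbf{X}_{2[i]})\}$; $\hat e_{\text{switch}}(f)=\frac1{n(n-1)}\sum_i\sum_{j\ne i}L\{f,(\mathbf{y}_{[j]},\mathbf{X}_{1[i]},\mathbf{X}_{2[j]})\}$; $\widehat{MR}(f)=\hat e_{\text{switch}}(f)/\hat e_{\text{orig}}(f)$. For $\gamma\in\mathbb{R}$, $\hat h_{-,\gamma}(f):=\gamma\hat e_{\text{orig}}(f)+\hat e_{\text{switch}}(f)$. Standing assumptions: $\min_{f\in\mathcal{F}}\hat e_{\text{orig}}(f)>0$ and minimizers of $\hat h_{-,\gamma}$ over $\mathcal{F}$ exist. *)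

From mathcomp Require Import all_boot all_order all_algebra.
Set Implicit Arguments. Unset Strict Implicit. Unset Printing Implicit Defensive.
Import Order.TTheory GRing.Theory Num.Theory.
Local Open Scope ring_scope.

Section MR.
Variables (R : realFieldType) (M Y X1 X2 : Type).
Variable L : M -> Y -> X1 -> X2 -> R.
Variables (n : nat) (y : 'I_n -> Y) (x1 : 'I_n -> X1) (x2 : 'I_n -> X2).

Definition e_orig (f : M) : R :=
  n%:R^-1 * \sum_(i < n) L f (y i) (x1 i) (x2 i).

Definition e_switch (f : M) : R :=
  (n%:R * (n%:R - 1))^-1 *
  \sum_(i < n) \sum_(j < n | j != i) L f (y j) (x1 i) (x2 j).

Definition MR_hat (f : M) : R := e_switch f / e_orig f.

Definition h_minus (gamma : R) (f : M) : R := gamma * e_orig f + e_switch f.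
End MR.

From mathcomp Require Import all_boot all_order all_algebra.
Import Order.TTheory GRing.Theory Num.Theory.
From mathcomp Require Import ring.
Set Implicit Arguments. Unset Strict Implicit.
Local Open Scope ring_scope.

(* Wherever e_orig f > 0 we have MR(f) = h_{-,gamma}(f) / e_orig(f) - gamma.
   For f in F, h(f) >= h(g) >= 0 and 0 < e_orig(f) <= eps_abs, so
   h(f) / e_orig(f) >= h(g) / eps_abs >= 0. *)

Section ModelReliance.
Variables (R : realFieldType) (M Y X1 X2 : Type).
Variable L : M -> Y -> X1 -> X2 -> R.
Variables (n : nat) (y : 'I_n -> Y) (x1 : 'I_n -> X1) (x2 : 'I_n -> X2).

Local Notation e_orig := (e_orig L y x1 x2).
Local Notation MR_hat := (MR_hat L y x1 x2).
Local Notation h_minus := (h_minus L y x1 x2).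

Lemma MR_hatE (gamma : R) (f : M) :
  e_orig f != 0 -> MR_hat f = h_minus gamma f / e_orig f - gamma.
Proof. by move=> e_neq0; rewrite /MR_hat /h_minus; field. Qed.

Variables (F : M -> Prop) (gamma : R) (g : M).
Hypothesis e_orig_gt0 : forall f, F f -> 0 < e_orig f.
Hypothesis g_min : forall f, F f -> h_minus gamma g <= h_minus gamma f.

Lemma MR_hat_ge_Ngamma (f : M) :
  0 <= h_minus gamma g -> F f -> - gamma <= MR_hat f.
Proof.
move=> h_ge0 Ff; rewrite (MR_hatE gamma) ?gt_eqF ?e_orig_gt0 // lerDr.
apply: divr_ge0; first exact: le_trans h_ge0 (g_min Ff).
exact: ltW (e_orig_gt0 Ff).
Qed.

Lemma MR_hat_ge_h_min (eps : R) (f : M) :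
  0 <= h_minus gamma g -> F f -> e_orig f <= eps ->
  h_minus gamma g / eps - gamma <= MR_hat f.
Proof.
move=> h_ge0 Ff e_le; have e_gt0 := e_orig_gt0 Ff.
rewrite (MR_hatE gamma) ?gt_eqF // lerD2r ler_pM ?g_min //.
  by rewrite invr_ge0 (le_trans (ltW e_gt0)).
by rewrite lef_pV2 ?posrE // (lt_le_trans e_gt0).
Qed.

Lemma MR_hat_eq_h_min (eps : R) :
  F g -> h_minus gamma g = 0 \/ e_orig g = eps ->
  h_minus gamma g / eps - gamma = MR_hat g.
Proof.
move=> Fg h_or_e; rewrite (MR_hatE gamma) ?gt_eqF ?e_orig_gt0 //.
by case: h_or_e => [-> | ->]; rewrite ?mul0r.
Qed.

End ModelReliance.

Theorem lemma14 (R : realFieldType) (M Y X1 X2 : Type)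
  (F : M -> Prop) (L : M -> Y -> X1 -> X2 -> R)
  (n : nat) (y : 'I_n -> Y) (x1 : 'I_n -> X1) (x2 : 'I_n -> X2)
  (gamma eps_abs : R) (g : M) :
  (2 <= n)%N ->
  (forall f a b c, 0 <= L f a b c) ->
  (* standing assumption: min over F of e_orig exists and is positive *)
  (exists f0, F f0 /\ (forall f, F f -> e_orig L y x1 x2 f0 <= e_orig L y x1 x2 f)
              /\ 0 < e_orig L y x1 x2 f0) ->
  0 < eps_abs ->
  (* g is a minimizer of h_{-,gamma} over F *)
  F g -> (forall f, F f -> h_minus L y x1 x2 gamma g <= h_minus L y x1 x2 gamma f) ->
  (0 <= h_minus L y x1 x2 gamma g ->
     (forall f, F f -> e_orig L y x1 x2 f <= eps_abs ->
        h_minus L y x1 x2 gamma g / eps_abs - gamma <= MR_hat L y x1 x2 f)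
     /\ (forall f, F f -> - gamma <= MR_hat L y x1 x2 f)) /\
  (0 <= h_minus L y x1 x2 gamma g -> e_orig L y x1 x2 g <= eps_abs ->
     (h_minus L y x1 x2 gamma g = 0 \/ e_orig L y x1 x2 g = eps_abs) ->
     h_minus L y x1 x2 gamma g / eps_abs - gamma = MR_hat L y x1 x2 g).
Proof.
move=> _ _ [f0 [_ [f0_min f0_gt0]]] _ Fg g_min.
have e_orig_gt0 f : F f -> 0 < e_orig L y x1 x2 f.
  by move=> Ff; apply: lt_le_trans f0_gt0 (f0_min f Ff).
split=> [h_ge0 | _ _].
  split=> f Ff; first exact: (MR_hat_ge_h_min e_orig_gt0 g_min h_ge0 Ff).
  exact: (MR_hat_ge_Ngamma e_orig_gt0 g_min h_ge0 Ff).
exact: (MR_hat_eq_h_min e_orig_gt0 Fg).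
Qed.
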